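(* Let $Z_u > 0$, $Z_{\bar u} \ge 0$, $Z_u^y$ and $Z_{\bar u}^y$ be real numbers with $0 < Z_u^y \le Z_u$ and $0 \le Z_{\bar u}^y \le Z_{\bar u}$, and let $w \ge Z_{\bar u}$. Put $Z_\rho = Z_u + Z_{\bar u}$ and $Z_\rho^y = Z_u^y + Z_{\bar u}^y$. Then \[ \mathrm{KL}\!\left(\mathcal{B}\!\left(\tfrac{Z_u^y}{Z_\rho^y}\right)\,\middle\|\,\mathcal{B}\!\left(\tfrac{Z_u}{Z_\rho}\right)\right) \;\le\; \lg\frac{Z_u + w}{Z_u^y}. \]
   Context: Interpretation (for motivation only): for a leaf $\rho$ of a decision tree, $Z_u, Z_{\bar u}$ are the total boosting weights of assessed (seen) and unassessed (unseen) training examples reaching $\rho$, $Z_u^y, Z_{\bar u}^y$ are the corresponding weights of examples with label $y$, and $w$ is the total unseen weight over all leaves. $\lg$ is the base-2 logarithm with $0\lg 0=0$ and $0\lg(0/0)=0$. $\mathcal{B}(p)$ is the Bernoulli distribution with parameter $p$, and $\mathrm{KL}(\mathcal{B}(p)\|\mathcal{B}(q)) = p\lg\frac{p}{q} + (1-p)\lg\frac{1-p}{1-q}$. *)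

From Stdlib Require Import Reals.
Open Scope R_scope.

Definition lg (x : R) : R := ln x / ln 2.

Definition xlg (p q : R) : R := if Req_EM_T p 0 then 0 else p * lg (p / q).

Definition KL_bern (p q : R) : R := xlg p q + xlg (1 - p) (1 - q).

(* By Jensen's inequality (concavity of ln), KL(B(p) || B(q)) is at most the
   logarithm of the second moment E_p[p/q] = p^2/q + (1-p)^2/(1-q) of the
   likelihood ratio.  For p = Z_u^y/Z_rho^y and q = Z_u/Z_rho this moment equals
   (Z_rho / (Z_rho^y)^2) ((Z_u^y)^2/Z_u + (Z_ubar^y)^2/Z_ubar) <= Z_rho / Z_rho^y,
   using Z^y <= Z on each part, and Z_rho / Z_rho^y <= (Z_u + w) / Z_u^y. *)

From Stdlib Require Import Reals Lra.
From Coquelicot Require Import Rcomplements.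
Open Scope R_scope.

Lemma ln_le_sub_1 (x : R) : 0 < x -> ln x <= x - 1.
Proof.
  intros Hx. pose proof (exp_ineq1_le (ln x)) as Hexp.
  rewrite exp_ln in Hexp; lra.
Qed.

Lemma ln_le_tangent (x M : R) : 0 < x -> 0 < M -> ln x <= x / M - 1 + ln M.
Proof.
  intros Hx HM.
  replace (ln x) with (ln (x / M) + ln M).
  - pose proof (ln_le_sub_1 (x / M) (Rdiv_lt_0_compat _ _ Hx HM)); lra.
  - rewrite <- ln_mult by (try apply Rdiv_lt_0_compat; lra).
    f_equal; field; lra.
Qed.

Lemma ln_2_pos : 0 < ln 2.
Proof. pose proof ln_lt_2; lra. Qed.

Lemma xlg_mul_ln2_le (p q M : R) :
  0 <= p -> (0 < p -> 0 < q) -> 0 < M ->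
  xlg p q * ln 2 <= p * (p / q) / M - p + p * ln M.
Proof.
  intros Hp Hq HM. unfold xlg.
  destruct (Req_EM_T p 0) as [-> | Hp0].
  - lra.
  - assert (Hpq : 0 < p / q) by (apply Rdiv_lt_0_compat; lra).
    replace (p * lg (p / q) * ln 2) with (p * ln (p / q))
      by (unfold lg; field; pose proof ln_2_pos; lra).
    replace (p * (p / q) / M - p + p * ln M) with (p * (p / q / M - 1 + ln M))
      by (field; lra).
    apply Rmult_le_compat_l; [lra | exact (ln_le_tangent _ _ Hpq HM)].
Qed.

(* Second moment of the likelihood ratio, i.e. 1 + chi^2(B(p) || B(q)). *)
Definition chi2_bern (p q : R) : R := p * (p / q) + (1 - p) * ((1 - p) / (1 - q)).

Lemma KL_bern_le_lg (p q M : R) :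
  0 <= p <= 1 -> (0 < p -> 0 < q) -> (p < 1 -> q < 1) -> 0 < M ->
  chi2_bern p q <= M -> KL_bern p q <= lg M.
Proof.
  intros Hp Hq Hq1 HM Hchi.
  pose proof (xlg_mul_ln2_le p q M ltac:(lra) Hq HM) as H1.
  pose proof (xlg_mul_ln2_le (1 - p) (1 - q) M ltac:(lra) ltac:(intros; lra) HM) as H2.
  assert (Hmoment : p * (p / q) / M + (1 - p) * ((1 - p) / (1 - q)) / M <= 1).
  { apply Rdiv_le_1 in Hchi; [| exact HM].
    unfold chi2_bern, Rdiv in Hchi |- *. lra. }
  unfold KL_bern, lg. apply Rle_div_r; [exact ln_2_pos |].
  rewrite Rmult_plus_distr_r. lra.
Qed.

Lemma sq_div_le (x y : R) : 0 <= x <= y -> 0 < y -> x * x / y <= x.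
Proof. intros Hx Hy. apply Rle_div_l; [exact Hy | nra]. Qed.

(* With junk values 0 / 0 = 0, the case [d = 0] (hence [b = 0]) needs no
   special treatment in the statement. *)
Lemma chi2_bern_ratio_le (a b c d : R) :
  0 < a <= c -> 0 <= b <= d ->
  chi2_bern (a / (a + b)) (c / (c + d)) <= (c + d) / (a + b).
Proof.
  intros Ha Hb. unfold chi2_bern.
  destruct (Req_dec d 0) as [-> | Hd].
  - replace b with 0 by lra.
    replace (1 - a / (a + 0)) with 0 by (field; lra).
    replace (a / (a + 0) * (a / (a + 0) / (c / (c + 0)))) with 1 by (field; lra).
    apply Rle_div_r; lra.
  - replace (a / (a + b) * (a / (a + b) / (c / (c + d)))
             + (1 - a / (a + b)) * ((1 - a / (a + b)) / (1 - c / (c + d))))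
      with ((c + d) / ((a + b) * (a + b)) * (a * a / c + b * b / d)) by (field; lra).
    pose proof (sq_div_le a c ltac:(lra) ltac:(lra)).
    pose proof (sq_div_le b d ltac:(lra) ltac:(lra)).
    apply Rle_trans with ((c + d) / ((a + b) * (a + b)) * (a + b)).
    + apply Rmult_le_compat_l; [| lra].
      left; apply Rdiv_lt_0_compat; nra.
    + right; field; lra.
Qed.

Lemma Rdiv_le_compat (x x' y y' : R) :
  0 <= x <= x' -> 0 < y <= y' -> x / y' <= x' / y.
Proof.
  intros Hx Hy. unfold Rdiv.
  apply Rmult_le_compat; [lra | left; apply Rinv_0_lt_compat; lra | lra |].
  apply Rinv_le_contravar; lra.
Qed.

Theorem mainTheorem2 (Zu Zub Zuy Zuby w : R)
  (hZu : 0 < Zu) (hZub : 0 <= Zub)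
  (hZuy0 : 0 < Zuy) (hZuy1 : Zuy <= Zu)
  (hZuby0 : 0 <= Zuby) (hZuby1 : Zuby <= Zub)
  (hw : Zub <= w) :
  KL_bern (Zuy / (Zuy + Zuby)) (Zu / (Zu + Zub)) <= lg ((Zu + w) / Zuy).
Proof.
  assert (Hp : 0 < Zuy / (Zuy + Zuby) <= 1).
  { split; [apply Rdiv_lt_0_compat; lra | apply (Rdiv_le_1 Zuy); lra]. }
  assert (Hq : 0 < Zu / (Zu + Zub)) by (apply Rdiv_lt_0_compat; lra).
  assert (Hq1 : Zuy / (Zuy + Zuby) < 1 -> Zu / (Zu + Zub) < 1).
  { intros Hp1.
    assert (0 < Zuby).
    { destruct (Req_dec Zuby 0) as [E | ]; [| lra].
      rewrite E, Rplus_0_r, Rdiv_diag in Hp1 by lra; lra. }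
    apply Rlt_div_l; lra. }
  apply KL_bern_le_lg; try lra.
  - apply Rdiv_lt_0_compat; lra.
  - apply Rle_trans with ((Zu + Zub) / (Zuy + Zuby)).
    + apply chi2_bern_ratio_le; lra.
    + apply Rdiv_le_compat; lra.
Qed.
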